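(* Let $\rho>0$ and suppose that, for each value of $c^S>0$, the variable-window IPT thresholds satisfy $c_n^D=0$ for all $n\leq(1+\rho)\frac{c^S}{\underline{q}}$ (the values $c_n^D\geq0$ for larger $n$ being arbitrary). Then $$\limsup_{c^S\to\infty}\frac{\mathrm{WADD}(t_I)}{c^S}\leq\frac{2}{\underline{q}}.$$
   Context: Setup. Let $\mathcal{A}=\{a_1,\dots,a_m\}$ be a finite alphabet and $\mathcal{P}$ the set of probability mass functions (p.m.f.s) on $\mathcal{A}$. $I(f\|f')=\sum_{a}f(a)\log\frac{f(a)}{f'(a)}$ is the Kullback–Leibler divergence. A known pre-change p.m.f. $f_0\in\mathcal{P}$ is fixed. $q:\mathcal{P}\to\mathbb{R}$ is quasiconcave and $L$-Lipschitz with respect to $\ell_1$, with $q_0:=q(f_0)<0<\underline{q}$, and the set of possible post-change p.m.f.s $\mathcal{P}_1$ is a nonempty subset of $\{f: q(f)\geq\underline{q}\}$. Under $P_{f_1,t_1}$ (expectation $E_{f_1,t_1}$), $X_1,\dots,X_{t_1-1}$ are i.i.d. $f_0$ and $X_{t_1},X_{t_1+1},\dots$ are i.i.d. $f_1$, independent of the former. For $i\leq j$, $\hat f_{X_i^j}$ is the empirical p.m.f. of $X_i,\dots,X_j$. $(x)^+=\max\{x,0\}$. For a stopping time $t$, the worst average detection delay is $\mathrm{WADD}(t)=\sup_{f_1\in\mathcal{P}_1,\,t_1\geq1}\operatorname{ess\,sup}_{X_1^{t_1-1}}E_{f_1,t_1}\left((t-t_1+1)^+\mid X_1^{t_1-1}\right)$.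 Variable-window IPT. Parameters: $c^S>0$ and a sequence $(c_n^D)_{n\geq1}$ of nonnegative thresholds. For $n\geq1$ let $f_n^*=\arg\min_{f\in\mathcal{P}:\,q(f)\geq c^S/n}I(f\|f_0)$. Put $Q(i,j)=(j-i+1)q(\hat f_{X_i^j})$ for $i\leq j$ and $Q(j+1,j)=0$. Set $\tau_1=1$ and for $k\geq1$: $S_k=\max_{\tau_k\leq i\leq k+1}Q(i,k)$, with $i_k$ a maximizing index and $n_k=k-i_k+1$; $D_k=I(\hat f_{X_{i_k}^k}\|f_{n_k}^* )$; $\tau_{k+1}=k+1$ if $S_k\geq c^S$ and $D_k<c^D_{n_k}$ (restart), and $\tau_{k+1}=\tau_k$ otherwise. The IPT stopping time is $t_I=\inf\{k: S_k\geq c^S\text{ and }D_k\geq c^D_{n_k}\}$. *)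

From Stdlib Require Import Reals List Arith.
Import ListNotations.
Open Scope R_scope.

(* Alphabet A = {0,...,m-1}; a p.m.f. is a function nat -> R, nonnegative
   on A, zero outside A, summing to 1 over A. *)
Definition sumA (m : nat) (F : nat -> R) : R :=
  fold_right (fun a acc => F a + acc) 0 (seq 0 m).

Definition is_pmf (m : nat) (f : nat -> R) : Prop :=
  (forall a, (a < m)%nat -> 0 <= f a) /\
  (forall a, (m <= a)%nat -> f a = 0) /\
  sumA m f = 1.

Definition l1dist (m : nat) (f g : nat -> R) : R :=
  sumA m (fun a => Rabs (f a - g a)).

Definition quasiconcave_on (m : nat) (q : (nat -> R) -> R) : Prop :=
  forall f g lam, is_pmf m f -> is_pmf m g -> 0 <= lam <= 1 ->
    Rmin (q f) (q g) <= q (fun a => lam * f a + (1 - lam) * g a).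

Definition lipschitz_on (m : nat) (q : (nat -> R) -> R) (L : R) : Prop :=
  forall f g, is_pmf m f -> is_pmf m g -> Rabs (q f - q g) <= L * l1dist m f g.

(* Kullback-Leibler divergence with values in R ∪ {+oo}:
   None = +oo (some a with f a > 0 = g a); convention 0 log 0 = 0. *)
Definition posb (r : R) : bool := if Rlt_dec 0 r then true else false.

Definition KL_finite (m : nat) (f g : nat -> R) : bool :=
  forallb (fun a => orb (negb (posb (f a))) (posb (g a))) (seq 0 m).

Definition KL_sum (m : nat) (f g : nat -> R) : R :=
  sumA m (fun a => if posb (f a) then f a * ln (f a / g a) else 0).

Definition KL (m : nat) (f g : nat -> R) : option R :=
  if KL_finite m f g then Some (KL_sum m f g) else None.

Definition KL_geb (m : nat) (f g : nat -> R) (c : R) : bool :=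
  match KL m f g with
  | None => true
  | Some v => if Rle_dec c v then true else false
  end.

Definition KL_le (m : nat) (g h f0 : nat -> R) : Prop :=
  match KL m h f0 with
  | None => True
  | Some vh => match KL m g f0 with Some vg => vg <= vh | None => False end
  end.

Definition is_fstar (m : nat) (q : (nat -> R) -> R) (f0 : nat -> R) (c : R)
  (g : nat -> R) : Prop :=
  (exists f, is_pmf m f /\ c <= q f) ->
  is_pmf m g /\ c <= q g /\
  (forall f, is_pmf m f -> c <= q f -> KL_le m g f f0).

(* Observation words: x = [X_1; X_2; ...]; letter x l = X_l (l >= 1). *)
Definition letter (x : list nat) (l : nat) : nat := nth (l - 1) x 0%nat.

Definition emp (m : nat) (x : list nat) (i j : nat) : nat -> R :=
  fun a => if (a <? m)%nat then
     INR (length (filter (fun l => Nat.eqb (letter x l) a) (seq i (S j - i))))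
       / INR (S j - i)
   else 0.

(* Q(i,j) = (j-i+1) q(emp X_i^j); equals 0 for i = j+1 *)
Definition Qw (m : nat) (q : (nat -> R) -> R) (x : list nat) (i j : nat) : R :=
  INR (S j - i) * q (emp m x i j).

Definition is_window_max (m : nat) (q : (nat -> R) -> R) (tau k : nat)
  (w : list nat) (i : nat) : Prop :=
  (tau <= i <= S k)%nat /\
  (forall i', (tau <= i' <= S k)%nat -> Qw m q w i' k <= Qw m q w i k).

(* State after processing X_1..X_k: (tau_{k+1}, [t_I <= k]). *)
Fixpoint ipt_state (m : nat) (q : (nat -> R) -> R) (cS : R) (cD : nat -> R)
  (fstar : nat -> nat -> R) (sel : nat -> nat -> list nat -> nat)
  (x : list nat) (k : nat) : nat * bool :=
  match k with
  | O => (1%nat, false)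
  | S k0 =>
    let (tau, stopped) := ipt_state m q cS cD fstar sel x k0 in
    let w := firstn k x in
    let i := sel tau k w in
    let n := (S k - i)%nat in
    let Sk := Qw m q w i k in
    let sOK := if Rle_dec cS Sk then true else false in
    let dOK := KL_geb m (emp m w i k) (fstar n) (cD n) in
    ((if andb sOK (negb dOK) then S k else tau), orb stopped (andb sOK dOK))
  end.

Fixpoint words (m j : nat) : list (list nat) :=
  match j with
  | O => [[]]
  | S j0 => flat_map (fun w => map (fun a => a :: w) (seq 0 m)) (words m j0)
  end.

Definition wprob (f : nat -> R) (w : list nat) : R :=
  fold_right (fun a acc => f a * acc) 1 w.

(* P_{f1,t1}(t_I > t1 - 1 + j | X_1^{t1-1} = xs), where t1 = length xs + 1 *)
Definition survive_prob (m : nat) (q : (nat -> R) -> R) (cS : R) (cD : nat -> R)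
  (fstar : nat -> nat -> R) (sel : nat -> nat -> list nat -> nat)
  (f1 : nat -> R) (xs : list nat) (j : nat) : R :=
  fold_right (fun ys acc =>
     wprob f1 ys *
     (if snd (ipt_state m q cS cD fstar sel (xs ++ ys) (length xs + j))
      then 0 else 1) + acc) 0 (words m j).

(* Partial sums of E((t_I - t1 + 1)^+ | X_1^{t1-1}) = sum_{j>=0} P(t_I >= t1 + j | ..) *)
Definition delay_partial m q cS cD fstar sel f1 xs (N : nat) : R :=
  fold_right (fun j acc => survive_prob m q cS cD fstar sel f1 xs j + acc) 0
    (seq 0 (S N)).

(* WADD(t_I) <= B: for every f1 in P1, t1 >= 1 and every prefix of positive
   f0-probability (ess sup over a discrete space), the conditional expected
   delay (a series of nonnegative terms) is <= B. *)
Definition WADD_le m q (P1 : (nat -> R) -> Prop) (f0 : nat -> R) cS cD fstar sel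
  (B : R) : Prop :=
  forall f1, P1 f1 ->
  forall xs : list nat, (forall a, In a xs -> (a < m)%nat /\ 0 < f0 a) ->
  forall N, delay_partial m q cS cD fstar sel f1 xs N <= B.

(* Fix a small [th > 0].  After any change point and any pre-change history,
   look at a block of [K d + T] post-change observations containing [K+1]
   windows of length [T ~ (1 + th) cS / qlow] spaced [d ~ th T] apart, with
   [K ~ 1 / th].
   1. Dynamics.  The detection threshold vanishes on windows of length at most
      [Lam = (1 + rho) cS / qlow] and the detection statistic [I(emp || f*_n)]
      is nonnegative (Gibbs), so restarts only happen on longer windows; hence
      if all [K+1] windows reach [Q >= cS] the test stops within the block
      ([good_windows_stop]).
   2. Concentration.  By Lipschitz continuity of [q] a window reaches [cS]
      unless some letter count deviates from its mean by more than [T eta];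
      Chebyshev and a union bound make the probability of surviving a block at
      most [(K+1) m / (T eta^2) <= th] ([block_survival]).
   3. Renewal.  Survival probabilities thus decay geometrically block by
      block, so the expected delay is at most [(K d + T) / (1 - th)], which is
      about [2 cS / qlow] ([delay_bound]); for large [cS] the parameters can be
      chosen to make it at most [(2 / qlow + eps) cS] ([block_parameters]). *)

From Stdlib Require Import Reals List Arith Lia Lra ZArith.
Import ListNotations.
Open Scope R_scope.

(** * Finite sums over lists *)

(* [lsum l F] is the sum of [F x] over the list [l]; [sumA], [survive_prob]
   and [delay_partial] are all sums of this shape. *)
Definition lsum {A : Type} (l : list A) (F : A -> R) : R :=
  fold_right (fun x acc => F x + acc) 0 l.

Lemma lsum_nil {A} (F : A -> R) : lsum [] F = 0.
Proof. reflexivity. Qed.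

Lemma lsum_cons {A} (x : A) l F : lsum (x :: l) F = F x + lsum l F.
Proof. reflexivity. Qed.

Lemma sumA_lsum m F : sumA m F = lsum (seq 0 m) F.
Proof. reflexivity. Qed.

Lemma lsum_app {A} (l1 l2 : list A) F : lsum (l1 ++ l2) F = lsum l1 F + lsum l2 F.
Proof.
  induction l1 as [|x l1 IH]; simpl app; [rewrite lsum_nil; lra|].
  rewrite !lsum_cons, IH. lra.
Qed.

Lemma lsum_plus {A} (l : list A) F G :
  lsum l (fun x => F x + G x) = lsum l F + lsum l G.
Proof. induction l as [|x l IH]; [simpl; lra|]. rewrite !lsum_cons, IH. lra. Qed.

Lemma lsum_scal {A} (l : list A) c F : lsum l (fun x => c * F x) = c * lsum l F.
Proof. induction l as [|x l IH]; [simpl; lra|]. rewrite !lsum_cons, IH. lra. Qed.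

Lemma lsum_le {A} (l : list A) F G :
  (forall x, In x l -> F x <= G x) -> lsum l F <= lsum l G.
Proof.
  induction l as [|x l IH]; intros H; [simpl; lra|]. rewrite !lsum_cons.
  apply Rplus_le_compat; [apply H; left; auto|apply IH; intros; apply H; right; auto].
Qed.

Lemma lsum_ext {A} (l : list A) F G :
  (forall x, In x l -> F x = G x) -> lsum l F = lsum l G.
Proof. intros H; apply Rle_antisym; apply lsum_le; intros x Hx; rewrite H; auto; lra. Qed.

Lemma lsum_const {A} (l : list A) c : lsum l (fun _ => c) = INR (length l) * c.
Proof.
  induction l as [|x l IH]; [simpl; lra|].
  rewrite lsum_cons, IH. simpl length. rewrite S_INR. lra.
Qed.

Lemma lsum_nonneg {A} (l : list A) F : (forall x, In x l -> 0 <= F x) -> 0 <= lsum l F.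
Proof.
  intros H. apply Rle_trans with (lsum l (fun _ => 0)).
  - rewrite lsum_const. lra.
  - apply lsum_le; auto.
Qed.

Lemma lsum_ge_term {A} (l : list A) F x :
  In x l -> (forall y, In y l -> 0 <= F y) -> F x <= lsum l F.
Proof.
  induction l as [|y l IH]; intros Hx H; [destruct Hx|]. rewrite lsum_cons.
  assert (0 <= lsum l F) by (apply lsum_nonneg; intros; apply H; right; auto).
  destruct Hx as [<-|Hx]; [lra|].
  assert (F x <= lsum l F) by (apply IH; auto; intros; apply H; right; auto).
  assert (0 <= F y) by (apply H; left; auto). lra.
Qed.

Lemma lsum_swap {A B} (l1 : list A) (l2 : list B) F :
  lsum l1 (fun x => lsum l2 (fun y => F x y)) = lsum l2 (fun y => lsum l1 (fun x => F x y)).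
Proof.
  induction l1 as [|x l1 IH].
  - rewrite lsum_nil. symmetry. rewrite <- (Rmult_0_r (INR (length l2))), <- lsum_const.
    apply lsum_ext; intros; apply lsum_nil.
  - rewrite lsum_cons, IH, <- lsum_plus. reflexivity.
Qed.

Lemma lsum_flat_map {A B} (g : A -> list B) l F :
  lsum (flat_map g l) F = lsum l (fun x => lsum (g x) F).
Proof. induction l as [|x l IH]; auto. simpl flat_map. rewrite lsum_app, IH. reflexivity. Qed.

Lemma lsum_map {A B} (g : A -> B) l F : lsum (map g l) F = lsum l (fun x => F (g x)).
Proof. induction l as [|x l IH]; auto. simpl map. rewrite !lsum_cons, IH. reflexivity. Qed.

Lemma lsum_seq_shift r : forall a b F,
  lsum (seq (a + b) r) F = lsum (seq a r) (fun j => F (j + b)%nat).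
Proof.
  induction r as [|r IH]; intros a b F; auto. simpl seq. rewrite !lsum_cons.
  replace (S (a + b)) with (S a + b)%nat by lia. rewrite IH. reflexivity.
Qed.

Lemma delta_sum m x F :
  lsum (seq 0 m) (fun a => if Nat.eqb x a then F a else 0) = if Nat.ltb x m then F x else 0.
Proof.
  induction m as [|m IH].
  - simpl. destruct (Nat.ltb_spec x 0); [lia|]. reflexivity.
  - rewrite seq_S, lsum_app, IH, lsum_cons, lsum_nil. simpl plus.
    destruct (Nat.ltb_spec x m); destruct (Nat.ltb_spec x (S m));
    destruct (Nat.eqb_spec x m); try lia; subst; lra.
Qed.

(** * Words and expectations under i.i.d. sampling *)

Lemma words_S m n F :
  lsum (words m (S n)) F = lsum (words m n) (fun w => lsum (seq 0 m) (fun a => F (a :: w))).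
Proof. simpl. rewrite lsum_flat_map. apply lsum_ext. intros. apply lsum_map. Qed.

Lemma words_app m j B F :
  lsum (words m (j + B)) F =
  lsum (words m j) (fun ys => lsum (words m B) (fun zs => F (ys ++ zs))).
Proof.
  revert F. induction j as [|j IH]; intros F.
  - change (words m 0) with [@nil nat]. rewrite lsum_cons, lsum_nil, Rplus_0_r.
    reflexivity.
  - change (S j + B)%nat with (S (j + B)). rewrite words_S, IH, words_S.
    apply lsum_ext. intros ys _. rewrite lsum_swap. reflexivity.
Qed.

Lemma words_letters m n w : In w (words m n) -> forall a, In a w -> (a < m)%nat.
Proof.
  revert w; induction n as [|n IH]; simpl; intros w Hw.
  - destruct Hw as [<-|[]]. intros a [].
  - apply in_flat_map in Hw. destruct Hw as [w' [Hw' Hin]].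
    apply in_map_iff in Hin. destruct Hin as [b [<- Hb]]. apply in_seq in Hb.
    intros a [<-|Ha]; [lia|]. eapply IH; eauto.
Qed.

Lemma words_length m n w : In w (words m n) -> length w = n.
Proof.
  revert w; induction n as [|n IH]; simpl; intros w Hw.
  - destruct Hw as [<-|[]]; auto.
  - apply in_flat_map in Hw. destruct Hw as [w' [Hw' Hin]].
    apply in_map_iff in Hin. destruct Hin as [b [<- _]]. simpl. rewrite IH; auto.
Qed.

Lemma wprob_app f ys zs : wprob f (ys ++ zs) = wprob f ys * wprob f zs.
Proof. induction ys as [|y ys IH]; simpl; [lra|]. rewrite IH; lra. Qed.

Lemma wprob_nonneg m f w :
  is_pmf m f -> (forall a, In a w -> (a < m)%nat) -> 0 <= wprob f w.
Proof.
  intros [Hf _]. induction w as [|a w IH]; simpl; intros H; [lra|].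
  apply Rmult_le_pos; [apply Hf, H; left; auto|apply IH; intros; apply H; right; auto].
Qed.

Lemma wprob_words_nonneg m f n w : is_pmf m f -> In w (words m n) -> 0 <= wprob f w.
Proof. intros Hf Hw. eapply wprob_nonneg; eauto. eapply words_letters; eauto. Qed.

(* [iid_expect m f B F] is the expectation of [F (Z_1 .. Z_B)] for [Z_i] i.i.d. [f]. *)
Definition iid_expect m f B (F : list nat -> R) : R :=
  lsum (words m B) (fun w => wprob f w * F w).

Lemma iid_expect_S m f B F :
  iid_expect m f (S B) F =
  iid_expect m f B (fun w => lsum (seq 0 m) (fun b => f b * F (b :: w))).
Proof.
  unfold iid_expect. rewrite words_S. apply lsum_ext. intros w _. rewrite <- lsum_scal.
  apply lsum_ext. intros. simpl. lra.
Qed.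

Lemma iid_expect_ext m f B F G :
  (forall w, F w = G w) -> iid_expect m f B F = iid_expect m f B G.
Proof. intros H. apply lsum_ext; intros; rewrite H; auto. Qed.

Lemma iid_expect_le m f B F G :
  is_pmf m f -> (forall w, F w <= G w) -> iid_expect m f B F <= iid_expect m f B G.
Proof.
  intros Hf H. apply lsum_le. intros w Hw.
  apply Rmult_le_compat_l; [eapply wprob_words_nonneg; eauto|auto].
Qed.

Lemma iid_expect_lin m f B F G c :
  iid_expect m f B (fun w => F w + c * G w) = iid_expect m f B F + c * iid_expect m f B G.
Proof. unfold iid_expect. rewrite <- lsum_scal, <- lsum_plus. apply lsum_ext; intros; ring. Qed.

Lemma iid_expect_scal m f B c F :
  iid_expect m f B (fun w => c * F w) = c * iid_expect m f B F.
Proof. unfold iid_expect. rewrite <- lsum_scal. apply lsum_ext; intros; ring. Qed.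

Lemma iid_expect_lsum {A} m f B (l : list A) F :
  iid_expect m f B (fun w => lsum l (fun j => F j w)) = lsum l (fun j => iid_expect m f B (F j)).
Proof.
  unfold iid_expect. rewrite <- lsum_swap. apply lsum_ext. intros w _.
  rewrite <- lsum_scal. reflexivity.
Qed.

Lemma iid_expect_one m f n : is_pmf m f -> iid_expect m f n (fun _ => 1) = 1.
Proof.
  intros Hf. induction n as [|n IH].
  - unfold iid_expect. simpl. lra.
  - rewrite iid_expect_S. transitivity (iid_expect m f n (fun _ => 1)); [|exact IH].
    apply iid_expect_ext. intros w.
    transitivity (sumA m f); [rewrite sumA_lsum; apply lsum_ext; intros; ring|]. destruct Hf as [_ [_ ->]]. reflexivity.
Qed.

Lemma bernoulli_sum m f a u v : is_pmf m f -> (a < m)%nat ->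
  lsum (seq 0 m) (fun b => f b * (if Nat.eqb b a then u else v)) = u * f a + v * (1 - f a).
Proof.
  intros [_ [_ Hf]] Ha.
  transitivity (lsum (seq 0 m) (fun b => v * f b + (if Nat.eqb a b then (u - v) * f b else 0))).
  { apply lsum_ext. intros b _. rewrite Nat.eqb_sym. destruct (Nat.eqb a b); lra. }
  rewrite lsum_plus, lsum_scal, delta_sum, <- sumA_lsum, Hf.
  destruct (Nat.ltb_spec a m); [|lia]. lra.
Qed.

(** * Letter counts: variance and Chebyshev bound *)

(* [count zs o T a] is the number of occurrences of [a] among the letters of
   [zs] at (0-based) positions [o, ..., o+T-1]. *)
Definition count (zs : list nat) (o T a : nat) : nat :=
  length (filter (fun l => Nat.eqb (nth l zs 0%nat) a) (seq o T)).

Lemma filter_shift (P P' : nat -> bool) T : forall o o',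
  (forall l, (l < T)%nat -> P (o + l)%nat = P' (o' + l)%nat) ->
  length (filter P (seq o T)) = length (filter P' (seq o' T)).
Proof.
  induction T as [|T IH]; intros o o' H; simpl; auto.
  pose proof (H 0%nat ltac:(lia)) as H0. rewrite !Nat.add_0_r in H0. rewrite H0.
  assert (Hrest : length (filter P (seq (S o) T)) = length (filter P' (seq (S o') T))).
  { apply IH. intros l Hl. replace (S o + l)%nat with (o + S l)%nat by lia.
    replace (S o' + l)%nat with (o' + S l)%nat by lia. apply H; lia. }
  destruct (P' o'); simpl; rewrite Hrest; auto.
Qed.

Lemma count_cons_S b w o T a : count (b :: w) (S o) T a = count w o T a.
Proof. apply filter_shift. intros. reflexivity. Qed.

Lemma count_cons_0 b w T a :
  count (b :: w) 0 (S T) a = ((if Nat.eqb b a then 1 else 0) + count w 0 T a)%nat.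
Proof.
  unfold count. rewrite <- cons_seq. simpl filter.
  destruct (Nat.eqb b a); simpl length;
    rewrite (filter_shift _ (fun l => Nat.eqb (nth l w 0%nat) a) T 1 0) by reflexivity;
    reflexivity.
Qed.

(* The count of [a] in a window of [T] i.i.d. letters is Binomial(T, f a). *)
Lemma count_variance m f a : is_pmf m f -> (a < m)%nat -> forall B o T, (o + T <= B)%nat ->
  iid_expect m f B (fun w => (INR (count w o T a) - INR T * f a) ^ 2) = INR T * f a * (1 - f a).
Proof.
  intros Hf Ha B. induction B as [|B IH]; intros o T HB.
  - assert (o = 0%nat /\ T = 0%nat) as [-> ->] by lia. unfold iid_expect. simpl. lra.
  - rewrite iid_expect_S. destruct o as [|o]; [destruct T as [|T]|].
    + transitivity (iid_expect m f B (fun _ => 0 * 1)).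
      * apply iid_expect_ext. intros w. transitivity (lsum (seq 0 m) (fun _ => 0)).
        -- apply lsum_ext. intros. unfold count. simpl. ring.
        -- rewrite lsum_const. ring.
      * rewrite iid_expect_scal. simpl. ring.
    + transitivity (iid_expect m f B (fun w =>
          (INR (count w 0 T a) - INR T * f a) ^ 2 + (f a * (1 - f a)) * 1)).
      { apply iid_expect_ext. intros w.
        transitivity (lsum (seq 0 m) (fun b => f b * (if Nat.eqb b a then
            (INR (count w 0 T a) + 1 - INR (S T) * f a) ^ 2
          else (INR (count w 0 T a) - INR (S T) * f a) ^ 2))).
        { apply lsum_ext. intros b _. rewrite count_cons_0. destruct (Nat.eqb b a).
          - rewrite plus_INR. simpl (INR 1). f_equal; f_equal; lra.
          - reflexivity. }
        rewrite bernoulli_sum; auto. rewrite S_INR. ring. }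
      rewrite iid_expect_lin, iid_expect_one, IH by (auto; lia). rewrite S_INR. ring.
    + transitivity (iid_expect m f B (fun w => (INR (count w o T a) - INR T * f a) ^ 2)).
      { apply iid_expect_ext. intros w.
        transitivity (lsum (seq 0 m) (fun b => (INR (count w o T a) - INR T * f a) ^ 2 * f b)).
        - apply lsum_ext. intros. rewrite count_cons_S. ring.
        - rewrite lsum_scal, <- sumA_lsum. destruct Hf as [_ [_ ->]]. ring. }
      apply IH. lia.
Qed.

Definition deviates f (zs : list nat) o T a (eta : R) : R :=
  if Rle_dec (Rabs (INR (count zs o T a) - INR T * f a)) (INR T * eta) then 0 else 1.

(* Chebyshev: the deviation probability is at most [1 / (T eta^2)]. *)
Lemma deviation_prob m f a B o T eta : is_pmf m f -> (a < m)%nat -> (o + T <= B)%nat ->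
  0 < INR T -> 0 < eta ->
  iid_expect m f B (fun w => deviates f w o T a eta) <= / (INR T * eta ^ 2).
Proof.
  intros Hf Ha HB HT He. assert (Hte : 0 < (INR T * eta) ^ 2) by (apply pow_lt; nra).
  apply Rle_trans with (iid_expect m f B (fun w =>
     / (INR T * eta) ^ 2 * (INR (count w o T a) - INR T * f a) ^ 2)).
  { apply iid_expect_le; auto. intros w. unfold deviates.
    set (x := INR (count w o T a) - INR T * f a).
    destruct Rle_dec as [|Hn].
    - apply Rmult_le_pos; [left; apply Rinv_0_lt_compat; auto|apply pow2_ge_0].
    - assert (Hx : (INR T * eta) ^ 2 < x ^ 2).
      { rewrite <- (pow2_abs x). assert (0 <= INR T * eta) by nra. nra. }
      apply Rmult_le_reg_l with ((INR T * eta) ^ 2); auto.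
      rewrite <- Rmult_assoc, Rinv_r by lra. lra. }
  rewrite iid_expect_scal, count_variance by auto.
  assert (f a * (1 - f a) <= 1) by nra.
  replace (/ (INR T * eta ^ 2)) with (/ (INR T * eta) ^ 2 * (INR T * 1)) by (field; lra).
  apply Rmult_le_compat_l; [left; apply Rinv_0_lt_compat; auto|].
  rewrite Rmult_assoc. apply Rmult_le_compat_l; lra.
Qed.

(** * Empirical p.m.f.s and the Gibbs inequality *)

Lemma letter_lt m w l :
  (0 < m)%nat -> (forall a, In a w -> (a < m)%nat) -> (letter w l < m)%nat.
Proof.
  intros Hm H. unfold letter.
  destruct (nth_in_or_default (l - 1) w 0%nat) as [Hi|Hd]; [auto|rewrite Hd; auto].
Qed.

Lemma count_total m (g : nat -> nat) L :
  (forall l, In l L -> (g l < m)%nat) ->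
  lsum (seq 0 m) (fun a => INR (length (filter (fun l => Nat.eqb (g l) a) L))) = INR (length L).
Proof.
  induction L as [|l0 L IH]; intros H.
  - simpl. transitivity (lsum (seq 0 m) (fun _ => 0)); [apply lsum_ext; auto|].
    rewrite lsum_const. lra.
  - transitivity (lsum (seq 0 m) (fun a => (if Nat.eqb (g l0) a then 1 else 0) +
       INR (length (filter (fun l => Nat.eqb (g l) a) L)))).
    { apply lsum_ext. intros b _. simpl filter.
      destruct (Nat.eqb (g l0) b); simpl length; try rewrite S_INR; lra. }
    rewrite lsum_plus, IH, delta_sum by (intros; apply H; right; auto).
    assert (g l0 < m)%nat by (apply H; left; auto).
    destruct (Nat.ltb_spec (g l0) m); [|lia]. simpl length. rewrite S_INR. lra.
Qed.

Lemma emp_pmf m w i j : (0 < m)%nat -> (forall a, In a w -> (a < m)%nat) -> (i <= j)%nat ->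
  is_pmf m (emp m w i j).
Proof.
  intros Hm Hw Hij. assert (HT : 0 < INR (S j - i)) by (apply lt_0_INR; lia).
  split; [|split].
  - intros a Ha. unfold emp. destruct (Nat.ltb a m); [|lra].
    apply Rmult_le_pos; [apply pos_INR|left; apply Rinv_0_lt_compat; auto].
  - intros a Ha. unfold emp. destruct (Nat.ltb_spec a m); [lia|reflexivity].
  - rewrite sumA_lsum. transitivity (lsum (seq 0 m) (fun a => / INR (S j - i) *
      INR (length (filter (fun l => Nat.eqb (letter w l) a) (seq i (S j - i)))))).
    { apply lsum_ext. intros a Ha. apply in_seq in Ha. unfold emp.
      destruct (Nat.ltb_spec a m); [unfold Rdiv; lra|lia]. }
    rewrite lsum_scal, count_total by (intros; apply letter_lt; auto).
    rewrite length_seq. field. lra.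
Qed.

Lemma posb_true r : posb r = true <-> 0 < r.
Proof. unfold posb. destruct (Rlt_dec 0 r); split; intros; auto; try discriminate; lra. Qed.

Lemma KL_term_lower f g : 0 < f -> 0 < g -> f - g <= f * ln (f / g).
Proof.
  intros Hf Hg.
  assert (Hinv : ln (f / g) = - ln (g / f)).
  { rewrite <- ln_Rinv by (apply Rdiv_lt_0_compat; auto). f_equal. field; lra. }
  pose proof (exp_ineq1_le (ln (g / f))) as He.
  rewrite exp_ln in He by (apply Rdiv_lt_0_compat; auto).
  assert (f * (1 + ln (g / f)) <= f * (g / f)) by (apply Rmult_le_compat_l; lra).
  replace (f * (g / f)) with g in * by (field; lra). rewrite Hinv. lra.
Qed.

Lemma KL_nonneg m f g : is_pmf m f -> is_pmf m g -> KL_geb m f g 0 = true.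
Proof.
  intros [Hf0 [_ Hf1]] [Hg0 [_ Hg1]]. unfold KL_geb, KL.
  destruct (KL_finite m f g) eqn:Hfin; [|reflexivity].
  destruct (Rle_dec 0 (KL_sum m f g)) as [|Hneg]; [reflexivity|exfalso; apply Hneg].
  unfold KL_finite in Hfin. rewrite forallb_forall in Hfin.
  unfold KL_sum. rewrite sumA_lsum.
  apply Rle_trans with (lsum (seq 0 m) (fun a => f a + (-1) * g a)).
  { rewrite lsum_plus, lsum_scal, <- !sumA_lsum, Hf1, Hg1. lra. }
  apply lsum_le. intros a Ha. pose proof (Hfin a Ha) as Hsupp. apply in_seq in Ha.
  assert (0 <= f a) by (apply Hf0; lia). assert (0 <= g a) by (apply Hg0; lia).
  destruct (posb (f a)) eqn:Pf.
  - simpl in Hsupp. apply posb_true in Hsupp. apply posb_true in Pf.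
    pose proof (KL_term_lower (f a) (g a) Pf Hsupp). lra.
  - assert (f a <= 0); [|lra].
    destruct (Rle_dec (f a) 0) as [|Hpos]; auto.
    apply Rnot_le_lt, posb_true in Hpos. congruence.
Qed.

(** * Windows of the post-change sample *)

Lemma in_firstn {A} k (x : list A) a : In a (firstn k x) -> In a x.
Proof. intros H. rewrite <- (firstn_skipn k x). apply in_or_app; auto. Qed.

(* The empirical p.m.f. of the [T] observations following the prefix [h]
   and [o] further ones is given by the letter counts of [zs]. *)
Lemma window_emp m h zs o T a : (1 <= T)%nat ->
  emp m (firstn (length h + o + T) (h ++ zs)) (length h + 1 + o) (length h + o + T) a =
  if Nat.ltb a m then INR (count zs o T a) / INR T else 0.
Proof.
  intros HT. unfold emp. replace (S (length h + o + T) - (length h + 1 + o))%nat with T by lia.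
  destruct (Nat.ltb a m); auto. do 2 f_equal. unfold count. apply filter_shift.
  intros l Hl. unfold letter. rewrite nth_firstn.
  destruct (Nat.ltb_spec (length h + 1 + o + l - 1) (length h + o + T)); [|lia].
  rewrite app_nth2 by lia. do 2 f_equal. lia.
Qed.

(* If every letter count of a window of length [T] is within [T eta] of its
   mean under [f1], then by Lipschitz continuity the window statistic
   [Q = T q(emp)] is at least [T (q f1 - L m eta)], hence at least [cS]. *)
Lemma window_stat_large m q L f1 qlow cS h zs o T eta :
  (0 < m)%nat -> (forall a, In a zs -> (a < m)%nat) -> (forall a, In a h -> (a < m)%nat) ->
  is_pmf m f1 -> qlow <= q f1 -> lipschitz_on m q L -> 0 <= L -> (1 <= T)%nat ->
  cS <= INR T * (qlow - L * (INR m * eta)) ->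
  (forall a, (a < m)%nat -> Rabs (INR (count zs o T a) - INR T * f1 a) <= INR T * eta) ->
  cS <= Qw m q (firstn (length h + o + T) (h ++ zs)) (length h + 1 + o) (length h + o + T).
Proof.
  intros Hm Hz Hh Hf Hq Hlip HL HT Hc Hdev. unfold Qw.
  replace (S (length h + o + T) - (length h + 1 + o))%nat with T by lia.
  set (g := emp m (firstn (length h + o + T) (h ++ zs)) (length h + 1 + o) (length h + o + T)).
  assert (HTp : 0 < INR T) by (apply lt_0_INR; lia).
  assert (Hg : is_pmf m g).
  { apply emp_pmf; [auto| |lia]. intros a Ha. apply in_firstn, in_app_or in Ha.
    destruct Ha; auto. }
  assert (Hl1 : l1dist m g f1 <= INR m * eta).
  { unfold l1dist. rewrite sumA_lsum.
    apply Rle_trans with (lsum (seq 0 m) (fun _ => eta));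
      [|rewrite lsum_const, length_seq; lra].
    apply lsum_le. intros a Ha. apply in_seq in Ha. unfold g. rewrite window_emp by auto.
    destruct (Nat.ltb_spec a m); [|lia]. specialize (Hdev a ltac:(lia)).
    replace (INR (count zs o T a) / INR T - f1 a)
      with ((INR (count zs o T a) - INR T * f1 a) / INR T) by (field; lra).
    unfold Rdiv. rewrite Rabs_mult, Rabs_inv, (Rabs_right (INR T)) by lra.
    apply Rmult_le_reg_r with (INR T); auto. rewrite Rmult_assoc, Rinv_l by lra. lra. }
  assert (Hlq : q f1 - q g <= L * l1dist m g f1).
  { eapply Rle_trans; [apply Rle_abs|]. rewrite Rabs_minus_sym. apply Hlip; auto. }
  assert (L * l1dist m g f1 <= L * (INR m * eta)) by (apply Rmult_le_compat_l; auto).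
  eapply Rle_trans; [apply Hc|]. apply Rmult_le_compat_l; lra.
Qed.

(** * Dynamics of the variable-window IPT *)

Section IPT_dynamics.

Variables (m : nat) (q : (nat -> R) -> R) (cS : R) (cD : nat -> R)
  (fstar : nat -> nat -> R) (sel : nat -> nat -> list nat -> nat).

Local Notation state := (ipt_state m q cS cD fstar sel).

Lemma state_S_fst x k :
  fst (state x (S k)) =
  (let tau := fst (state x k) in
   let w := firstn (S k) x in let i := sel tau (S k) w in let n := (S (S k) - i)%nat in
   if andb (if Rle_dec cS (Qw m q w i (S k)) then true else false)
       (negb (KL_geb m (emp m w i (S k)) (fstar n) (cD n))) then S (S k) else tau).
Proof. simpl. destruct (state x k). reflexivity. Qed.

Lemma state_S_snd x k :
  snd (state x (S k)) =
  (let tau := fst (state x k) in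
   let w := firstn (S k) x in let i := sel tau (S k) w in let n := (S (S k) - i)%nat in
   orb (snd (state x k))
   (andb (if Rle_dec cS (Qw m q w i (S k)) then true else false)
       (KL_geb m (emp m w i (S k)) (fstar n) (cD n)))).
Proof. simpl. destruct (state x k). reflexivity. Qed.

Lemma tau_bounds x k : (1 <= fst (state x k) <= S k)%nat.
Proof.
  induction k as [|k IH]; [simpl; lia|].
  rewrite state_S_fst. cbv zeta. destruct (andb _ _); lia.
Qed.

Lemma tau_step x k : fst (state x (S k)) = fst (state x k) \/ fst (state x (S k)) = S (S k).
Proof. rewrite state_S_fst. cbv zeta. destruct (andb _ _); auto. Qed.

Lemma tau_mono x k k' : (k <= k')%nat -> (fst (state x k) <= fst (state x k'))%nat.
Proof.
  induction 1 as [|k' _ IH]; auto.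
  pose proof (tau_step x k'). pose proof (tau_bounds x k'). lia.
Qed.

Lemma stop_mono x k k' : (k <= k')%nat -> snd (state x k) = true -> snd (state x k') = true.
Proof.
  induction 1 as [|k' _ IH]; auto. intros Hs.
  rewrite state_S_snd. cbv zeta. rewrite IH; auto.
Qed.

Lemma state_prefix x x' k : firstn k x = firstn k x' -> state x k = state x' k.
Proof.
  revert x x'. induction k as [|k IH]; intros x x' H; auto. cbn [ipt_state].
  rewrite (IH x x'), H; [reflexivity|].
  rewrite <- (Nat.min_l k (S k)) by lia. rewrite <- !firstn_firstn, H. reflexivity.
Qed.

Lemma Qw_empty x k : Qw m q x (S k) k = 0.
Proof. unfold Qw. rewrite Nat.sub_diag. simpl. ring. Qed.

Variables (f0 : nat -> R) (Lam : R).
Hypothesis Hm : (0 < m)%nat.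
Hypothesis HcS : 0 < cS.
Hypothesis HcD : forall n, INR n <= Lam -> cD n = 0.
Hypothesis Hfstar : forall n, (1 <= n)%nat -> is_fstar m q f0 (cS / INR n) (fstar n).
Hypothesis Hsel : forall tau k w, (tau <= S k)%nat -> is_window_max m q tau k w (sel tau k w).

(* On a window of length [n <= Lam] the detection threshold is 0, and the
   detection statistic [I(emp || f*_n)] is nonnegative by Gibbs' inequality,
   so the test passes as soon as the window statistic reaches [cS]. *)
Lemma short_window_detects w i k :
  (forall a, In a w -> (a < m)%nat) -> (i <= k)%nat -> INR (S k - i) <= Lam ->
  cS <= Qw m q w i k ->
  KL_geb m (emp m w i k) (fstar (S k - i)) (cD (S k - i)) = true.
Proof.
  intros Hw Hik Hn Hq. set (n := (S k - i)%nat) in *.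
  rewrite (HcD n Hn).
  assert (Hpe : is_pmf m (emp m w i k)) by (apply emp_pmf; auto).
  assert (Hn1 : (1 <= n)%nat) by (unfold n; lia).
  assert (Hnp : 0 < INR n) by (apply lt_0_INR; lia).
  destruct (Hfstar n Hn1) as [Hpf _]; [|apply KL_nonneg; auto].
  exists (emp m w i k). split; auto. unfold Qw in Hq. fold n in Hq.
  apply Rmult_le_reg_l with (INR n); auto.
  unfold Rdiv. rewrite <- Rmult_assoc, Rinv_r_simpl_m; lra.
Qed.

(* If the test does not stop at time [k+1] although some admissible window
   reaches [cS], then the maximizing window also does, and the test restarts. *)
Lemma good_window_restarts x k i :
  snd (state x (S k)) = false -> (fst (state x k) <= i <= S (S k))%nat ->
  cS <= Qw m q (firstn (S k) x) i (S k) -> fst (state x (S k)) = S (S k).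
Proof.
  intros Hns Hi Hq. pose proof (tau_bounds x k).
  rewrite state_S_snd in Hns. rewrite state_S_fst. cbv zeta in *.
  destruct (Hsel (fst (state x k)) (S k) (firstn (S k) x) ltac:(lia)) as [_ Hmax].
  apply Bool.orb_false_iff in Hns. destruct Hns as [_ Hns].
  destruct (Rle_dec cS _) as [_|Hlt]; [|exfalso; apply Hlt; eapply Rle_trans; [apply Hq|apply Hmax; auto]].
  simpl in *. rewrite Hns. reflexivity.
Qed.

Lemma short_window_no_restart x k :
  (forall a, In a x -> (a < m)%nat) -> snd (state x (S k)) = false ->
  INR (S (S k) - fst (state x k)) <= Lam -> fst (state x (S k)) = fst (state x k).
Proof.
  intros Hx Hns HL. pose proof (tau_bounds x k).
  rewrite state_S_snd in Hns. rewrite state_S_fst. cbv zeta in *.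
  set (w := firstn (S k) x) in *. set (i := sel (fst (state x k)) (S k) w) in *.
  destruct (Hsel (fst (state x k)) (S k) w ltac:(lia)) as [Hi _]. fold i in Hi.
  apply Bool.orb_false_iff in Hns. destruct Hns as [_ Hns].
  destruct (Rle_dec cS (Qw m q w i (S k))) as [Hq|]; [|reflexivity].
  assert (Hik : (i <= S k)%nat).
  { destruct (Nat.eq_dec i (S (S k))) as [E|]; [|lia].
    rewrite E, Qw_empty in Hq. lra. }
  assert (Hdet : KL_geb m (emp m w i (S k)) (fstar (S (S k) - i)) (cD (S (S k) - i)) = true).
  { apply short_window_detects; auto.
    - intros a Ha. apply Hx. eapply in_firstn; eauto.
    - eapply Rle_trans; [|apply HL]. apply le_INR. lia. }
  rewrite Hdet in Hns. discriminate.
Qed.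

Lemma good_short_window_stops x k i :
  (forall a, In a x -> (a < m)%nat) -> (fst (state x k) <= i <= S (S k))%nat ->
  INR (S (S k) - fst (state x k)) <= Lam ->
  cS <= Qw m q (firstn (S k) x) i (S k) -> snd (state x (S k)) = true.
Proof.
  intros Hx Hi HL Hq. destruct (snd (state x (S k))) eqn:Hns; auto.
  pose proof (tau_bounds x k).
  pose proof (good_window_restarts x k i Hns Hi Hq).
  pose proof (short_window_no_restart x k Hx Hns HL). lia.
Qed.

Lemma tau_frozen x k0 k1 :
  (forall a, In a x -> (a < m)%nat) -> (k0 <= k1)%nat -> snd (state x k1) = false ->
  INR (S k1 - fst (state x k0)) <= Lam -> fst (state x k1) = fst (state x k0).
Proof.
  intros Hx. induction 1 as [|k1 Hk IH]; intros Hns HL; auto.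
  assert (Hk1 : snd (state x k1) = false).
  { destruct (snd (state x k1)) eqn:E; auto. rewrite (stop_mono x k1 (S k1)) in Hns; auto. }
  assert (HLk : INR (S k1 - fst (state x k0)) <= Lam).
  { eapply Rle_trans; [|apply HL]. apply le_INR. lia. }
  rewrite <- (IH Hk1 HLk). apply short_window_no_restart; auto. rewrite IH; auto.
Qed.

Lemma tau_after_first_window x s T :
  (1 <= T)%nat -> snd (state x (s + T)) = false ->
  cS <= Qw m q (firstn (s + T) x) (s + 1) (s + T) -> (s + 2 <= fst (state x (s + T)))%nat.
Proof.
  intros HT. replace (s + T)%nat with (S (s + (T - 1))) by lia. intros Hns Hq.
  destruct (le_lt_dec (fst (state x (s + (T - 1)))) (s + 1)).
  - rewrite (good_window_restarts x (s + (T - 1)) (s + 1)); auto; lia.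
  - pose proof (tau_mono x (s + (T - 1)) (S (s + (T - 1))) ltac:(lia)). lia.
Qed.

(* Main combinatorial fact: consider [K+1] windows of length [T] starting at
   [s+1, s+1+d, ..., s+1+Kd], with [T <= K d] and [d + T <= Lam].  If all of
   them reach [cS], the test stops by time [s + K d + T]: after the first window
   [tau] lies in [s+2, s+T+1]; the first window starting at or after [tau]
   ends at most [d + T - 1] steps after [tau], so no restart can occur
   before it and it forces a stop. *)
Lemma good_windows_stop x s T d K :
  (forall a, In a x -> (a < m)%nat) ->
  (1 <= T)%nat -> (1 <= d)%nat -> (T <= K * d)%nat -> INR (d + T) <= Lam ->
  (forall j, (j <= K)%nat ->
     cS <= Qw m q (firstn (s + j * d + T) x) (s + 1 + j * d) (s + j * d + T)) ->
  snd (state x (s + (K * d + T))) = true.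
Proof.
  intros Hx HT Hd HK HL Hgood.
  destruct (snd (state x (s + (K * d + T)))) eqn:Hns; auto. exfalso.
  assert (Hnot : forall k, (k <= s + (K * d + T))%nat -> snd (state x k) = false).
  { intros k Hk. destruct (snd (state x k)) eqn:E; auto.
    rewrite (stop_mono x k _ Hk E) in Hns. discriminate. }
  assert (Hr : (s + 2 <= fst (state x (s + T)))%nat).
  { apply tau_after_first_window; auto. apply Hnot. nia.
    pose proof (Hgood 0%nat ltac:(lia)) as Hq. rewrite Nat.mul_0_l, !Nat.add_0_r in Hq. exact Hq. }
  set (r := fst (state x (s + T))) in *.
  assert (Hr2 : (r <= S (s + T))%nat) by apply tau_bounds.
  set (j := ((r - (s + 1) + d - 1) / d)%nat).
  assert (Hj1 : (d * j <= r - (s + 1) + d - 1)%nat) by (apply Nat.Div0.mul_div_le; lia).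
  assert (Hj2 : (r - (s + 1) + d - 1 < d * S j)%nat) by (apply Nat.mul_succ_div_gt; lia).
  assert (HjK : (j <= K)%nat) by nia.
  set (e := (s + j * d + T)%nat).
  assert (He : (s + T + 1 <= e <= s + (K * d + T))%nat) by (unfold e; nia).
  assert (Hfroz : fst (state x (e - 1)) = r).
  { apply tau_frozen; auto; [lia|apply Hnot; lia|].
    eapply Rle_trans; [|apply HL]. apply le_INR. unfold e. nia. }
  assert (Hstop : snd (state x e) = true).
  { pose proof (Hgood j HjK) as Hq. fold e in Hq.
    replace e with (S (e - 1)) in Hq |- * at 1 by lia.
    apply good_short_window_stops with (s + 1 + j * d)%nat; auto; rewrite Hfroz.
    - unfold e; nia.
    - eapply Rle_trans; [|apply HL]. apply le_INR. unfold e. nia. }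
  rewrite Hnot in Hstop by lia. discriminate.
Qed.

End IPT_dynamics.

(** * Survival probabilities and the expected delay *)

Lemma geometric_block_sum (u : nat -> R) B delta :
  (1 <= B)%nat -> 0 <= delta < 1 -> (forall j, 0 <= u j <= 1) ->
  (forall j, u (j + B)%nat <= delta * u j) ->
  forall n, lsum (seq 0 n) u <= INR B / (1 - delta).
Proof.
  intros HB Hd Hu Hs n.
  assert (Hnn : forall k, 0 <= lsum (seq 0 k) u) by (intros; apply lsum_nonneg; intros; apply Hu).
  assert (Hle1 : forall k, lsum (seq 0 k) u <= INR k).
  { intros k. apply Rle_trans with (lsum (seq 0 k) (fun _ => 1)).
    - apply lsum_le; intros; apply Hu.
    - rewrite lsum_const, length_seq. lra. }
  assert (Hrec : lsum (seq 0 n) u <= INR B + delta * lsum (seq 0 n) u).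
  { destruct (le_lt_dec n B) as [Hc|Hc].
    - pose proof (Hle1 n). apply le_INR in Hc. pose proof (Hnn n). nra.
    - assert (Hsplit : lsum (seq 0 n) u
                         = lsum (seq 0 B) u + lsum (seq 0 (n - B)) (fun j => u (j + B)%nat)).
      { replace n with (B + (n - B))%nat at 1 by lia.
        rewrite seq_app, lsum_app, lsum_seq_shift. reflexivity. }
      assert (Htail : lsum (seq 0 (n - B)) (fun j => u (j + B)%nat)
                      <= delta * lsum (seq 0 (n - B)) u).
      { rewrite <- lsum_scal. apply lsum_le; intros; apply Hs. }
      assert (Hmono : lsum (seq 0 (n - B)) u <= lsum (seq 0 n) u).
      { replace n with ((n - B) + B)%nat at 2 by lia. rewrite seq_app, lsum_app.
        assert (0 <= lsum (seq (0 + (n - B)) B) u) by (apply lsum_nonneg; intros; apply Hu). lra. }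
      pose proof (Hle1 B).
      assert (delta * lsum (seq 0 (n - B)) u <= delta * lsum (seq 0 n) u)
        by (apply Rmult_le_compat_l; lra).
      lra. }
  apply Rmult_le_reg_r with (1 - delta); [lra|].
  unfold Rdiv. rewrite Rmult_assoc, Rinv_l by lra. lra.
Qed.

Section IPT_delay.

Variables (m : nat) (q : (nat -> R) -> R) (cS : R) (cD : nat -> R)
  (fstar : nat -> nat -> R) (sel : nat -> nat -> list nat -> nat) (f1 : nat -> R).
Hypothesis Hf1 : is_pmf m f1.

Local Notation state := (ipt_state m q cS cD fstar sel).

Local Notation survival := (survive_prob m q cS cD fstar sel f1).

Lemma survival_unfold h B :
  survival h B =
  lsum (words m B) (fun zs => wprob f1 zs * (if snd (state (h ++ zs) (length h + B)) then 0 else 1)).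
Proof. reflexivity. Qed.

Lemma survival_bounds h B : 0 <= survival h B <= 1.
Proof.
  rewrite survival_unfold. split.
  - apply lsum_nonneg. intros zs Hzs.
    apply Rmult_le_pos; [eapply wprob_words_nonneg; eauto|destruct (snd _); lra].
  - apply Rle_trans with (iid_expect m f1 B (fun _ => 1)); [|rewrite (iid_expect_one m f1 B Hf1); lra].
    apply lsum_le. intros zs Hzs.
    pose proof (wprob_words_nonneg m f1 B zs Hf1 Hzs). destruct (snd _); lra.
Qed.

(* Markov property of the survival probabilities: if from every history the
   test survives [B] further steps with probability at most [delta], then
   surviving [j + B] steps is at most [delta] times surviving [j] steps. *)
Lemma survival_block xs j B delta :
  0 <= delta ->
  (forall h, (forall a, In a h -> (a < m)%nat) -> survival h B <= delta) ->
  (forall a, In a xs -> (a < m)%nat) ->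
  survival xs (j + B) <= delta * survival xs j.
Proof.
  intros Hd Hblock Hxs. rewrite !survival_unfold, words_app, <- lsum_scal.
  apply lsum_le. intros ys Hys.
  assert (Hlen := words_length _ _ _ Hys).
  assert (Hwy := wprob_words_nonneg m f1 j ys Hf1 Hys).
  destruct (snd (state (xs ++ ys) (length xs + j))) eqn:Hstop.
  - apply Rle_trans with (lsum (words m B) (fun _ => 0)); [|rewrite lsum_const; lra].
    apply lsum_le. intros zs _.
    assert (Hst : snd (state (xs ++ ys ++ zs) (length xs + (j + B))) = true).
    { apply stop_mono with (length xs + j)%nat; [lia|].
      rewrite (state_prefix _ _ _ _ _ _ _ (xs ++ ys)); auto.
      rewrite app_assoc, firstn_app, <- Hlen, <- length_app, firstn_all, Nat.sub_diag,
        firstn_O, app_nil_r. reflexivity. }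
    rewrite Hst. lra.
  - rewrite Rmult_1_r, Rmult_comm.
    apply Rle_trans with (wprob f1 ys * survival (xs ++ ys) B).
    + rewrite survival_unfold, <- lsum_scal. right. apply lsum_ext. intros zs _.
      rewrite wprob_app, <- app_assoc, length_app, Hlen, Nat.add_assoc. ring.
    + apply Rmult_le_compat_l; auto. apply Hblock.
      intros a Ha. apply in_app_or in Ha. destruct Ha; [auto|eapply words_letters; eauto].
Qed.

Lemma delay_bound xs B delta :
  (forall a, In a xs -> (a < m)%nat) -> (1 <= B)%nat -> 0 <= delta < 1 ->
  (forall h, (forall a, In a h -> (a < m)%nat) -> survival h B <= delta) ->
  forall N, delay_partial m q cS cD fstar sel f1 xs N <= INR B / (1 - delta).
Proof.
  intros Hxs HB Hd Hblock N.
  apply (geometric_block_sum (survival xs)); auto.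
  - intros j. apply survival_bounds.
  - intros j. apply survival_block; auto. lra.
Qed.

Variables (L qlow : R) (f0 : nat -> R) (Lam : R).
Hypothesis Hm : (0 < m)%nat.
Hypothesis HcS : 0 < cS.
Hypothesis Hf1q : qlow <= q f1.
Hypothesis Hlip : lipschitz_on m q L.
Hypothesis HL : 0 <= L.
Hypothesis HcD : forall n, INR n <= Lam -> cD n = 0.
Hypothesis Hfstar : forall n, (1 <= n)%nat -> is_fstar m q f0 (cS / INR n) (fstar n).
Hypothesis Hsel : forall tau k w, (tau <= S k)%nat -> is_window_max m q tau k w (sel tau k w).

Lemma deviates_lt_1 zs o T a eta :
  deviates f1 zs o T a eta < 1 -> Rabs (INR (count zs o T a) - INR T * f1 a) <= INR T * eta.
Proof. unfold deviates. destruct Rle_dec; auto. lra. Qed.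

Lemma deviates_nonneg zs o T a eta : 0 <= deviates f1 zs o T a eta.
Proof. unfold deviates. destruct Rle_dec; lra. Qed.

(* Union bound, pointwise: if the test survives the block of [K d + T] steps,
   some letter count deviates in one of the [K+1] windows. *)
Lemma survival_implies_deviation h zs T d K eta :
  (forall a, In a h -> (a < m)%nat) -> (forall a, In a zs -> (a < m)%nat) ->
  (1 <= T)%nat -> (1 <= d)%nat -> (T <= K * d)%nat -> INR (d + T) <= Lam ->
  cS <= INR T * (qlow - L * (INR m * eta)) ->
  (if snd (state (h ++ zs) (length h + (K * d + T))) then 0 else 1)
  <= lsum (seq 0 (S K)) (fun j => lsum (seq 0 m) (fun a => deviates f1 zs (j * d) T a eta)).
Proof.
  intros Hh Hzs HT Hd HK HLam Hc.
  set (dev := lsum (seq 0 (S K)) (fun j => lsum (seq 0 m) (fun a => deviates f1 zs (j * d) T a eta))).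
  assert (Hdev_j : forall j, (j <= K)%nat ->
            lsum (seq 0 m) (fun a => deviates f1 zs (j * d) T a eta) <= dev).
  { intros j Hj. apply (lsum_ge_term _ (fun j => lsum (seq 0 m) (fun a => deviates f1 zs (j * d) T a eta))).
    - apply in_seq; lia.
    - intros; apply lsum_nonneg; intros; apply deviates_nonneg. }
  assert (Hdev0 : 0 <= dev).
  { apply lsum_nonneg; intros; apply lsum_nonneg; intros; apply deviates_nonneg. }
  destruct (Rlt_dec dev 1) as [Hsmall|Hbig];
    [|apply Rnot_lt_le in Hbig; destruct (snd _); lra].
  assert (Hstop : snd (state (h ++ zs) (length h + (K * d + T))) = true).
  { apply (good_windows_stop m q cS cD fstar sel f0 Lam); auto.
    - intros a Ha. apply in_app_or in Ha. destruct Ha; auto.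
    - intros j Hj.
      apply window_stat_large with (f1 := f1) (L := L) (qlow := qlow) (eta := eta); auto.
      intros a Ha. apply deviates_lt_1.
      apply Rle_lt_trans with dev; [|exact Hsmall].
      eapply Rle_trans; [|apply (Hdev_j j Hj)].
      apply (lsum_ge_term _ (fun a => deviates f1 zs (j * d) T a eta)).
      + apply in_seq; lia.
      + intros; apply deviates_nonneg. }
  rewrite Hstop. exact Hdev0.
Qed.

(* Union bound plus Chebyshev: a block of [K d + T] steps is survived with
   probability at most [(K+1) m / (T eta^2)]. *)
Lemma block_survival h T d K eta :
  (forall a, In a h -> (a < m)%nat) ->
  (1 <= T)%nat -> (1 <= d)%nat -> (T <= K * d)%nat -> INR (d + T) <= Lam -> 0 < eta ->
  cS <= INR T * (qlow - L * (INR m * eta)) ->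
  survival h (K * d + T) <= INR (S K) * INR m / (INR T * eta ^ 2).
Proof.
  intros Hh HT Hd HK HLam He Hc.
  assert (HTp : 0 < INR T) by (apply lt_0_INR; lia).
  apply Rle_trans with (iid_expect m f1 (K * d + T) (fun zs => lsum (seq 0 (S K)) (fun j =>
     lsum (seq 0 m) (fun a => deviates f1 zs (j * d) T a eta)))).
  { rewrite survival_unfold. apply lsum_le. intros zs Hzs.
    apply Rmult_le_compat_l; [eapply wprob_words_nonneg; eauto|].
    apply survival_implies_deviation; auto. eapply words_letters; eauto. }
  rewrite iid_expect_lsum.
  apply Rle_trans with (lsum (seq 0 (S K)) (fun _ => lsum (seq 0 m) (fun _ => / (INR T * eta ^ 2)))).
  - apply lsum_le. intros j Hj. apply in_seq in Hj. rewrite iid_expect_lsum.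
    apply lsum_le. intros a Ha. apply in_seq in Ha. apply deviation_prob; auto; [lia|].
    assert (j * d <= K * d)%nat by (apply Nat.mul_le_mono_r; lia). lia.
  - rewrite !lsum_const, !length_seq. right. field. split; lra.
Qed.

End IPT_delay.

(** * Choice of the block parameters *)

Lemma wadd_block_bound m q L f0 qlow (P1 : (nat -> R) -> Prop) cS cD fstar sel Lam T d K eta :
  (0 < m)%nat -> lipschitz_on m q L -> 0 <= L -> 0 < cS ->
  (forall f, P1 f -> is_pmf m f /\ qlow <= q f) ->
  (forall n, INR n <= Lam -> cD n = 0) ->
  (forall n, (1 <= n)%nat -> is_fstar m q f0 (cS / INR n) (fstar n)) ->
  (forall tau k w, (tau <= S k)%nat -> is_window_max m q tau k w (sel tau k w)) ->
  (1 <= T)%nat -> (1 <= d)%nat -> (T <= K * d)%nat -> INR (d + T) <= Lam -> 0 < eta ->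
  cS <= INR T * (qlow - L * (INR m * eta)) ->
  INR (S K) * INR m / (INR T * eta ^ 2) < 1 ->
  WADD_le m q P1 f0 cS cD fstar sel
    (INR (K * d + T) / (1 - INR (S K) * INR m / (INR T * eta ^ 2))).
Proof.
  intros Hm Hlip HL HcS HP1 HcD Hfstar Hsel HT Hd HK HLam He Hc Hdelta f1 Hf1 xs Hxs N.
  destruct (HP1 f1 Hf1) as [Hf1p Hf1q].
  apply delay_bound; auto; [intros a Ha; apply Hxs; auto|lia| |].
  - split; [|exact Hdelta]. apply Rmult_le_pos; [apply Rmult_le_pos; apply pos_INR|].
    left. apply Rinv_0_lt_compat, Rmult_lt_0_compat; [apply lt_0_INR; lia|apply pow_lt; auto].
  - intros h Hh. apply (block_survival m q cS cD fstar sel f1 Hf1p L qlow f0 Lam); auto.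
Qed.

Lemma WADD_le_weaken m q P1 f0 cS cD fstar sel B B' :
  B <= B' -> WADD_le m q P1 f0 cS cD fstar sel B -> WADD_le m q P1 f0 cS cD fstar sel B'.
Proof. intros HB H f1 Hf1 xs Hxs N. eapply Rle_trans; [apply H; auto|exact HB]. Qed.

Lemma lipschitz_weaken m q L L' : L <= L' -> lipschitz_on m q L -> lipschitz_on m q L'.
Proof.
  intros HL H f g Hf Hg. eapply Rle_trans; [apply H; auto|].
  apply Rmult_le_compat_r; [|exact HL].
  unfold l1dist. rewrite sumA_lsum. apply lsum_nonneg. intros. apply Rabs_pos.
Qed.

Definition nceil (y : R) : nat := Z.to_nat (up y).

Lemma nceil_spec y : 0 <= y -> y < INR (nceil y) <= y + 1.
Proof.
  intros Hy. destruct (archimed y) as [H1 H2].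
  assert (Hp : (0 < up y)%Z) by (apply lt_0_IZR; lra).
  unfold nceil. rewrite INR_IZR_INZ, Z2Nat.id by lia. lra.
Qed.

Lemma spacing_bounds T K th :
  (1 <= K)%nat -> 0 < th -> 1 <= INR K * th ->
  (T <= K * (T / K + 1))%nat /\ INR (T / K + 1) <= th * INR T + 1 /\
  INR (K * (T / K + 1)) <= INR T + INR K.
Proof.
  intros HK Hth HKth.
  assert (Hdiv1 : (K * (T / K) <= T)%nat) by apply Nat.Div0.mul_div_le.
  assert (Hdiv2 : (T < K * S (T / K))%nat) by (apply Nat.mul_succ_div_gt; lia).
  assert (HdivR : INR K * INR (T / K) <= INR T) by (rewrite <- mult_INR; apply le_INR; auto).
  assert (HKp : 0 < INR K) by (apply lt_0_INR; lia).
  rewrite Nat.mul_add_distr_l, Nat.mul_1_r, !plus_INR, mult_INR. simpl (INR 1).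
  repeat split; [lia| |lra].
  assert (INR (T / K) <= th * INR T); [|lra].
  apply Rmult_le_reg_l with (INR K); [exact HKp|].
  assert (0 <= INR (T / K)) by apply pos_INR. assert (0 <= INR T) by apply pos_INR. nra.
Qed.

(* For [c = cS / qlow] large compared with the fixed constants [th, K, eta],
   the window length [T ~ (1+th) c] and spacing [d ~ th T] satisfy all the
   requirements of [wadd_block_bound], and the resulting bound is at most
   [(2 / qlow + eps) cS]. *)
Lemma window_parameters m qlow L rho eps th K eta cS :
  0 < qlow -> 0 < L -> 0 < eps -> (0 < m)%nat -> 0 < cS ->
  0 < th -> th <= 1 / 16 -> 16 * th <= rho -> 16 * th <= eps * qlow ->
  (1 <= K)%nat -> 1 <= INR K * th -> 0 < eta ->
  L * (INR m * eta) = qlow * th / (1 + th) ->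
  2 + INR K <= th * (cS / qlow) -> INR (S K) * INR m / eta ^ 2 <= th * (cS / qlow) ->
  exists T d, (1 <= T)%nat /\ (1 <= d)%nat /\ (T <= K * d)%nat /\
    INR (d + T) <= (1 + rho) * cS / qlow /\
    cS <= INR T * (qlow - L * (INR m * eta)) /\
    INR (S K) * INR m / (INR T * eta ^ 2) < 1 /\
    INR (K * d + T) / (1 - INR (S K) * INR m / (INR T * eta ^ 2)) <= (2 / qlow + eps) * cS.
Proof.
  intros Hq HL Heps Hm HcS Hth Hth1 Hrho Hthe HK HKth He Heta Hc1 Hc2.
  set (c := cS / qlow) in *. assert (Hc : 0 < c) by (unfold c; apply Rdiv_lt_0_compat; auto).
  assert (HcS' : cS = qlow * c) by (unfold c; field; lra).
  set (T := nceil ((1 + th) * c)).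
  destruct (nceil_spec ((1 + th) * c)) as [HT1 HT2]; [nra|]. fold T in HT1, HT2.
  assert (HTp : 0 < INR T) by nra.
  destruct (spacing_bounds T K th HK Hth HKth) as (HTd & Hd & HKd).
  set (d := (T / K + 1)%nat) in *.
  set (delta := INR (S K) * INR m / (INR T * eta ^ 2)).
  assert (Hdelta : 0 <= delta <= th).
  { unfold delta. assert (Hm' : 0 < INR m) by (apply lt_0_INR; auto).
    assert (He2 : 0 < eta ^ 2) by (apply pow_lt; auto).
    assert (Hnum : 0 <= INR (S K) * INR m) by (apply Rmult_le_pos; apply pos_INR).
    replace (INR (S K) * INR m / (INR T * eta ^ 2)) with (INR (S K) * INR m / eta ^ 2 / INR T)
      by (field; split; lra).
    split; [apply Rle_mult_inv_pos; [apply Rle_mult_inv_pos|]; lra|].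
    apply Rmult_le_reg_r with (INR T); [lra|]. unfold Rdiv at 1.
    rewrite Rmult_assoc, Rinv_l, Rmult_1_r by lra. nra. }
  assert (HT : (1 <= T)%nat) by (apply INR_lt; simpl; lra).
  assert (Hsq : th * (th * c) <= 1 / 16 * (th * c)) by (apply Rmult_le_compat_r; nra).
  exists T, d. repeat split; [exact HT|unfold d; lia|exact HTd| | | |].
  - rewrite plus_INR. replace ((1 + rho) * cS / qlow) with ((1 + rho) * c) by (unfold c; field; lra).
    assert (HTle : (1 + th) * INR T <= (1 + th) * ((1 + th) * c + 1))
      by (apply Rmult_le_compat_l; lra).
    assert (Hexp : (1 + th) * ((1 + th) * c + 1) = c + 2 * (th * c) + th * (th * c) + 1 + th)
      by ring.
    assert (Hrc : 16 * th * c <= rho * c) by (apply Rmult_le_compat_r; lra).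
    pose proof (pos_INR K). lra.
  - rewrite Heta. replace (qlow - qlow * th / (1 + th)) with (qlow / (1 + th)) by (field; lra).
    rewrite HcS'. apply Rmult_le_reg_r with (1 + th); [lra|].
    replace (INR T * (qlow / (1 + th)) * (1 + th)) with (INR T * qlow) by (field; lra). nra.
  - fold delta. lra.
  - fold delta. rewrite plus_INR.
    replace ((2 / qlow + eps) * cS) with ((2 + eps * qlow) * c) by (rewrite HcS'; field; lra).
    apply Rmult_le_reg_r with (1 - delta); [lra|]. unfold Rdiv.
    rewrite Rmult_assoc, Rinv_l, Rmult_1_r by lra.
    assert ((2 + 16 * th) * c * (1 - th) <= (2 + eps * qlow) * c * (1 - delta))
      by (apply Rmult_le_compat; nra).
    assert ((2 + 16 * th) * c * (1 - th) = 2 * c + 14 * (th * c) - 16 * (th * (th * c))) by ring.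
    assert (INR T <= c + th * c + 1) by (rewrite <- (Rmult_1_l c) at 1; rewrite <- Rmult_plus_distr_r; lra).
    pose proof (pos_INR K). lra.
Qed.

Lemma block_constants m qlow L rho eps :
  0 < qlow -> 0 < L -> (0 < m)%nat -> 0 < rho -> 0 < eps ->
  exists th K eta, 0 < th /\ th <= 1 / 16 /\ 16 * th <= rho /\ 16 * th <= eps * qlow /\
    (1 <= K)%nat /\ 1 <= INR K * th /\ 0 < eta /\ L * (INR m * eta) = qlow * th / (1 + th).
Proof.
  intros Hq HL Hm Hrho Heps.
  set (th := Rmin (Rmin rho (eps * qlow)) 1 / 16).
  assert (Hth : 0 < th /\ th <= 1 / 16 /\ 16 * th <= rho /\ 16 * th <= eps * qlow).
  { unfold th. assert (0 < eps * qlow) by nra.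
    repeat split; unfold Rmin; repeat destruct Rle_dec; lra. }
  destruct Hth as (Hth0 & Hth1 & Hth2 & Hth3).
  assert (Hm' : 0 < INR m) by (apply lt_0_INR; auto).
  destruct (nceil_spec (1 / th)) as [HK _]; [left; apply Rdiv_lt_0_compat; lra|].
  exists th, (nceil (1 / th)), (qlow * th / ((1 + th) * L * INR m)).
  repeat split; auto.
  - destruct (nceil (1 / th)); [simpl in HK; assert (0 < 1 / th) by (apply Rdiv_lt_0_compat; lra); lra|lia].
  - apply Rmult_le_reg_r with (/ th); [apply Rinv_0_lt_compat; lra|].
    rewrite Rmult_assoc, Rinv_r, Rmult_1_r by lra. lra.
  - apply Rdiv_lt_0_compat; [nra|]. apply Rmult_lt_0_compat; [nra|lra].
  - field. repeat split; lra.
Qed.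

Lemma block_parameters m qlow L rho eps :
  0 < qlow -> 0 < L -> (0 < m)%nat -> 0 < rho -> 0 < eps ->
  exists C, forall cS, C <= cS -> 0 < cS ->
  exists T d K eta, (1 <= T)%nat /\ (1 <= d)%nat /\ (T <= K * d)%nat /\
    INR (d + T) <= (1 + rho) * cS / qlow /\ 0 < eta /\
    cS <= INR T * (qlow - L * (INR m * eta)) /\
    INR (S K) * INR m / (INR T * eta ^ 2) < 1 /\
    INR (K * d + T) / (1 - INR (S K) * INR m / (INR T * eta ^ 2)) <= (2 / qlow + eps) * cS.
Proof.
  intros Hq HL Hm Hrho Heps.
  destruct (block_constants m qlow L rho eps) as (th & K & eta & Hth & Hth1 & Hthr & Hthe & HK1 & HK
    & He & Heta); auto.
  set (M1 := (2 + INR K) / th). set (M2 := INR (S K) * INR m / eta ^ 2 / th).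
  assert (HM1 : 0 <= M1) by (unfold M1; apply Rle_mult_inv_pos; [pose proof (pos_INR K)|]; lra).
  assert (HM2 : 0 <= M2).
  { unfold M2. apply Rle_mult_inv_pos; [|lra]. apply Rle_mult_inv_pos; [|apply pow_lt; auto].
    apply Rmult_le_pos; apply pos_INR. }
  exists (qlow * (M1 + M2)). intros cS HC HcS.
  assert (Hc : M1 + M2 <= cS / qlow).
  { apply Rmult_le_reg_l with qlow; auto. unfold Rdiv. rewrite <- Rmult_assoc, Rinv_r_simpl_m; lra. }
  assert (Hc1 : 2 + INR K <= th * (cS / qlow)).
  { replace (2 + INR K) with (th * M1) by (unfold M1; field; lra).
    apply Rmult_le_compat_l; lra. }
  assert (Hc2 : INR (S K) * INR m / eta ^ 2 <= th * (cS / qlow)).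
  { replace (INR (S K) * INR m / eta ^ 2) with (th * M2) by (unfold M2; field; lra).
    apply Rmult_le_compat_l; lra. }
  destruct (window_parameters m qlow L rho eps th K eta cS) as (T & d & HT); auto.
  exists T, d, K, eta. tauto.
Qed.

Theorem theorem4 (m : nat) (q : (nat -> R) -> R) (L : R) (f0 : nat -> R)
  (qlow : R) (P1 : (nat -> R) -> Prop) (rho : R)
  (cD : R -> nat -> R) (fstar : R -> nat -> nat -> R)
  (sel : R -> nat -> nat -> list nat -> nat) :
  (0 < m)%nat ->
  is_pmf m f0 ->
  quasiconcave_on m q ->
  lipschitz_on m q L ->
  q f0 < 0 -> 0 < qlow ->
  (exists f, P1 f) ->
  (forall f, P1 f -> is_pmf m f /\ qlow <= q f) ->
  0 < rho ->
  (forall cS n, 0 < cS -> 0 <= cD cS n) ->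
  (forall cS n, 0 < cS -> INR n <= (1 + rho) * cS / qlow -> cD cS n = 0) ->
  (forall cS n, 0 < cS -> (1 <= n)%nat -> is_fstar m q f0 (cS / INR n) (fstar cS n)) ->
  (forall cS tau k w, 0 < cS -> (tau <= S k)%nat ->
     is_window_max m q tau k w (sel cS tau k w)) ->
  forall eps, 0 < eps ->
  exists C, forall cS, C <= cS -> 0 < cS ->
    WADD_le m q P1 f0 cS (cD cS) (fstar cS) (sel cS) ((2 / qlow + eps) * cS).
Proof.
  intros Hm _ _ Hlip _ Hq _ HP1 Hrho _ HcD Hfstar Hsel eps Heps.
  (* A positive Lipschitz constant is needed to size the concentration radius. *)
  set (L' := Rabs L + 1).
  assert (HL' : 0 < L') by (unfold L'; pose proof (Rabs_pos L); lra).
  assert (Hlip' : lipschitz_on m q L')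
    by (apply lipschitz_weaken with L; [unfold L'; pose proof (Rle_abs L); lra|exact Hlip]).
  destruct (block_parameters m qlow L' rho eps) as [C HC]; auto.
  exists C. intros cS HCc HcS.
  destruct (HC cS HCc HcS) as (T & d & K & eta & HT & Hd & HK & HLam & He & Hc & Hdelta & Hbound).
  apply WADD_le_weaken with (1 := Hbound).
  apply (wadd_block_bound m q L' f0 qlow P1 cS (cD cS) (fstar cS) (sel cS) ((1 + rho) * cS / qlow));
    auto; lra.
Qed.
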